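(* (a) Let $(A,\circ)$ be an anti-pre-Lie algebra with sub-adjacent Lie algebra $(A,[-,-])$. Define a bilinear form $\mathcal B$ on $A\oplus A^*$ by $\mathcal B(x+a^*,y+b^* )=\langle x,b^*\rangle+\langle a^*,y\rangle$ for $x,y\in A$, $a^*,b^*\in A^*$. Then $\mathcal B$ is a nondegenerate commutative 2-cocycle on the semi-direct product Lie algebra $A\ltimes_{-\mathcal L^*_\circ}A^*$. (b) Conversely, let $(\mathfrak g,[-,-])$ be a Lie algebra and $(\rho,\mathfrak g^* )$ a representation of it on $\mathfrak g^*$. Suppose that the bilinear form $\mathcal B(x+a^*,y+b^* )=\langle x,b^*\rangle+\langle a^*,y\rangle$ on $\mathfrak g\oplus\mathfrak g^*$ is a commutative 2-cocycle on $\mathfrak g\ltimes_\rho\mathfrak g^*$. Then there is a compatible anti-pre-Lie algebra structure $(\mathfrak g,\circ)$ on $(\mathfrak g,[-,-])$ (i.e. $(\mathfrak g,\circ)$ is anti-pre-Lie and $x\circ y-y\circ x=[x,y]$) such that $\rho=-\mathcal L^*_\circ$.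
   Context: All vector spaces are finite-dimensional over a field $\mathbb F$ of characteristic $0$. An anti-pre-Lie algebra is a vector space $A$ with a bilinear operation $\circ$ such that, writing $[x,y]=x\circ y-y\circ x$, for all $x,y,z\in A$: (i) $x\circ(y\circ z)-y\circ(x\circ z)=[y,x]\circ z$, and (ii) $[x,y]\circ z+[y,z]\circ x+[z,x]\circ y=0$; $(A,[-,-])$ is then a Lie algebra (the sub-adjacent Lie algebra). $-\mathcal L^*_\circ$ denotes the dual of the representation $-\mathcal L_\circ$ ($\mathcal L_\circ(x)y=x\circ y$), i.e. $\langle -\mathcal L^*_\circ(x)a^*,y\rangle=\langle a^*,x\circ y\rangle$. For a representation $(\rho,V)$ of a Lie algebra $\mathfrak g$, the semi-direct product $\mathfrak g\ltimes_\rho V$ is $\mathfrak g\oplus V$ with bracket $[x+u,y+v]=[x,y]+\rho(x)v-\rho(y)u$. A commutative 2-cocycle on a Lie algebra is a symmetric bilinear form $\mathcal B$ with $\mathcal B([x,y],z)+\mathcal B([y,z],x)+\mathcal B([z,x],y)=0$. *)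

From HB Require Import structures.
From mathcomp Require Import all_boot all_order all_algebra.
Set Implicit Arguments. Unset Strict Implicit. Unset Printing Implicit Defensive.
Import GRing.Theory.
Local Open Scope ring_scope.

(* Finite-dimensional vector spaces over F are modelled by [vectType F];
   the dual space A^* is the space of linear forms 'Hom(A, F^o), and the
   pairing <a^*, x> is application a^* x. *)

Section Defs.
Variable F : fieldType.

Definition dual (A : vectType F) := 'Hom(A, F^o).

Definition bilinear_op (U V W : lmodType F) (f : U -> V -> W) :=
  (forall a x y z, f (a *: x + y) z = a *: f x z + f y z) /\
  (forall a x y z, f z (a *: x + y) = a *: f z x + f z y).

Definition bilinear_form (U : lmodType F) (B : U -> U -> F) :=
  (forall a x y z, B (a *: x + y) z = a * B x z + B y z) /\
  (forall a x y z, B z (a *: x + y) = a * B z x + B z y).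

Definition lie_bracket (L : lmodType F) (br : L -> L -> L) :=
  [/\ bilinear_op br,
      (forall x, br x x = 0) &
      (forall x y z, br x (br y z) + br y (br z x) + br z (br x y) = 0)].

Definition commutator (A : lmodType F) (circ : A -> A -> A) x y :=
  circ x y - circ y x.

Definition anti_pre_Lie (A : lmodType F) (circ : A -> A -> A) :=
  [/\ bilinear_op circ,
      (forall x y z, circ x (circ y z) - circ y (circ x z)
                     = circ (commutator circ y x) z) &
      (forall x y z, circ (commutator circ x y) z + circ (commutator circ y z) x
                     + circ (commutator circ z x) y = 0)].

Definition representation (L V : lmodType F) (br : L -> L -> L)
    (rho : L -> V -> V) :=
  [/\ bilinear_op rho &
      (forall x y v, rho (br x y) v = rho x (rho y v) - rho y (rho x v))].

Definition semidirect (L V : lmodType F) (br : L -> L -> L)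
    (rho : L -> V -> V) (p q : L * V) : L * V :=
  (br p.1 q.1, rho p.1 q.2 - rho q.1 p.2).

Definition comm_2cocycle (L : lmodType F) (br : L -> L -> L) (B : L -> L -> F) :=
  [/\ bilinear_form B,
      (forall x y, B x y = B y x) &
      (forall x y z, B (br x y) z + B (br y z) x + B (br z x) y = 0)].

Definition nondegenerate_form (L : lmodType F) (B : L -> L -> F) :=
  forall x, (forall y, B x y = 0) -> x = 0.

(* minus the dual of L_circ: <(negLdual x) a, y> = <a, x o y> *)
Definition negLdual (A : vectType F) (circ : A -> A -> A) (x : A)
    (a : dual A) : dual A :=
  linfun (fun y : A => a (circ x y)).

Definition pairing_form (A : vectType F) (p q : A * dual A) : F :=
  (q.2 p.1 : F) + (p.2 q.1 : F).

End Defs.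

(* For the semi-direct product g ⋉_rho g^*, the cyclic sum in the cocycle
   condition for B splits into three copies of the defect
   <c, [x,y]> - <rho x c, y> + <rho y c, x>, so B is a commutative 2-cocycle
   exactly when <c, [x,y]> = <rho x c, y> - <rho y c, x>.  For the commutator
   of any bilinear product and rho = -L^*_o this holds by definition (part (a)
   uses nothing but bilinearity).  Conversely, since g is finite-dimensional,
   g = g^** and <a, x o y> = <rho x a, y> defines a product o with
   rho = -L^*_o; the defect identity says its commutator is [-,-], the
   representation property of rho gives the first anti-pre-Lie identity, and
   together with the Jacobi identity this turns the second one into 2 S = 0
   for its cyclic sum S, whence S = 0 in characteristic 0. *)

From HB Require Import structures.
From mathcomp Require Import all_boot all_order all_algebra.
From mathcomp Require Import ring.
From Stdlib Require Import FunctionalExtensionality.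
Import GRing.Theory.
Set Implicit Arguments.
Unset Strict Implicit.
Unset Printing Implicit Defensive.

Local Open Scope ring_scope.

Section Bilinear.
Variables (F : fieldType) (U V W : lmodType F) (f : U -> V -> W).
Hypothesis f_bil : bilinear_op f.

Lemma bilinear_opBr z u v : f z (u - v) = f z u - f z v.
Proof. by rewrite addrC -scaleN1r f_bil.2 scaleN1r addrC. Qed.

Lemma bilinear_op0r z : f z 0 = 0.
Proof. by rewrite -(subrr 0) bilinear_opBr subrr. Qed.

End Bilinear.

Section Duality.
Variable F : fieldType.

Lemma linfun_linearE (B C : vectType F) (f : B -> C) : linear f -> linfun f =1 f.
Proof.
move=> f_lin; pose fl : {linear B -> C} :=
  HB.pack f (GRing.isSemilinear.Build F B C _ f (GRing.semilinear_linear f_lin)).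
exact: (lfunE fl).
Qed.

Variable A : vectType F.

Definition coord_form (i : 'I_(\dim {:A})) : dual A :=
  linfun (coord (vbasis fullv) i : A -> F^o).

Lemma coord_formE i v : coord_form i v = coord (vbasis fullv) i v.
Proof. by rewrite lfunE. Qed.

Lemma dual_expand (a : dual A) :
  a = \sum_(i < \dim {:A}) a (vbasis fullv)`_i *: coord_form i.
Proof.
apply/lfunP => v; rewrite sum_lfunE {1}(coord_vbasis (memvf v)) linear_sum.
by apply: eq_bigr => i _; rewrite scale_lfunE coord_formE linearZ /=; exact: mulrC.
Qed.

Lemma dual_inj (u v : A) : (forall a : dual A, a u = a v) -> u = v.
Proof.
move=> uv; apply/eqP; rewrite -subr_eq0; apply/eqP.
rewrite (coord_vbasis (memvf (u - v))); apply: big1 => i _.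
by rewrite -coord_formE raddfB /= uv subrr scale0r.
Qed.

(* Without [@fullv F A] the basis would be elaborated over the field F^o. *)
Definition bidual_vec (g : 'Hom(dual A, F^o)) : A :=
  \sum_(i < \dim {:A}) g (coord_form i) *: (vbasis (@fullv F A))`_i.

Lemma bidual_vecE g (a : dual A) : a (bidual_vec g) = g a.
Proof.
rewrite [in RHS](dual_expand a) !linear_sum; apply: eq_bigr => i _.
by rewrite !linearZ /=; exact: mulrC.
Qed.

End Duality.

Section AntiPreLieFromJacobi.
Variables (F : fieldType) (V : lmodType F) (circ : V -> V -> V).
Hypotheses (two_neq0 : 2%:R != 0 :> F) (circ_bil : bilinear_op circ).
Hypothesis left_identity : forall x y z,
  circ x (circ y z) - circ y (circ x z) = circ (commutator circ y x) z.
Hypothesis commutator_jacobi : forall x y z,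
  commutator circ x (commutator circ y z) + commutator circ y (commutator circ z x)
  + commutator circ z (commutator circ x y) = 0.

Let sum3B (a b c d e f : V) :
  (a - b) + (c - d) + (e - f) = (a + c + e) - (b + d + f).
Proof. by rewrite (addrACA a) -opprD (addrACA (a + c)) -opprD. Qed.

Let sum3_rot (a b c : V) : b + c + a = a + b + c.
Proof. by rewrite addrC addrA. Qed.

Lemma anti_pre_Lie_of_Jacobi : anti_pre_Lie circ.
Proof.
split=> // x y z.
pose P := circ x (circ y z) + circ y (circ z x) + circ z (circ x y).
pose Q := circ x (circ z y) + circ y (circ x z) + circ z (circ y x).
have cyc_left : circ (commutator circ x y) z + circ (commutator circ y z) x
                + circ (commutator circ z x) y = Q - P.
  by rewrite -!left_identity sum3B (sum3_rot (circ x (circ z y))).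
have cyc_right : circ x (commutator circ y z) + circ y (commutator circ z x)
                 + circ z (commutator circ x y) = P - Q.
  by rewrite /commutator !(bilinear_opBr circ_bil) sum3B.
have jacobi : (circ x (commutator circ y z) - circ (commutator circ y z) x)
  + (circ y (commutator circ z x) - circ (commutator circ z x) y)
  + (circ z (commutator circ x y) - circ (commutator circ x y) z) = 0.
  exact: commutator_jacobi.
rewrite sum3B cyc_right (sum3_rot (circ (commutator circ x y) z)) cyc_left
        -(opprB Q P) -opprD in jacobi.
rewrite cyc_left; move/eqP: jacobi; rewrite oppr_eq0 -mulr2n -scaler_nat.
by rewrite scaler_eq0 (negPf two_neq0) => /eqP.
Qed.

End AntiPreLieFromJacobi.

Section PairingForm.
Variables (F : fieldType) (A : vectType F).
Local Notation B := (@pairing_form F A).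

Lemma pairing_form_bilinear : bilinear_form B.
Proof.
by split=> k [x a] [y b] [z c];
  rewrite /pairing_form /= linearP add_lfunE scale_lfunE /GRing.scale /= /GRing.scale /=;
  ring.
Qed.

Lemma pairing_formC p q : B p q = B q p.
Proof. by rewrite /pairing_form addrC. Qed.

Lemma pairing_form_nondegenerate : nondegenerate_form B.
Proof.
move=> [x a] Bx0; have a0 : a = 0.
  apply/lfunP => y; have := Bx0 (y, 0).
  by rewrite /pairing_form /= !zero_lfunE add0r.
have x0 : x = 0.
  by apply: dual_inj => b; have := Bx0 (0, b); rewrite /pairing_form /= a0 !linear0 addr0.
by rewrite a0 x0.
Qed.

Variables (br : A -> A -> A) (rho : A -> dual A -> dual A).

Definition pairing_defect x y (c : dual A) : F :=
  c (br x y) - (rho x c y - rho y c x).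

Lemma pairing_form_cyclic_sum x y z a b c :
  B (semidirect br rho (x, a) (y, b)) (z, c)
  + B (semidirect br rho (y, b) (z, c)) (x, a)
  + B (semidirect br rho (z, c) (x, a)) (y, b)
  = pairing_defect x y c + pairing_defect y z a + pairing_defect z x b.
Proof. by rewrite /pairing_form /pairing_defect /= !lfunE /= !lfunE /=; ring. Qed.

Lemma comm_2cocycle_pairing :
  (forall x y (c : dual A), c (br x y) = rho x c y - rho y c x) ->
  comm_2cocycle (semidirect br rho) B.
Proof.
move=> compat; split=> [||[x a] [y b] [z c]].
- exact: pairing_form_bilinear.
- exact: pairing_formC.
- by rewrite pairing_form_cyclic_sum /pairing_defect !compat !subrr !addr0.
Qed.

Lemma comm_2cocycle_pairing_compat : bilinear_op rho ->
  comm_2cocycle (semidirect br rho) B ->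
  forall x y (c : dual A), c (br x y) = rho x c y - rho y c x.
Proof.
move=> rho_bil [_ _ cocycle] x y c; apply/eqP; rewrite -subr_eq0.
have := cocycle (x, 0) (y, 0) (0, c).
rewrite pairing_form_cyclic_sum /pairing_defect !(bilinear_op0r rho_bil) !lfunE.
by rewrite !subrr !addr0 => ->.
Qed.

End PairingForm.

Section NegLdual.
Variables (F : fieldType) (A : vectType F) (circ : A -> A -> A).
Hypothesis circ_bil : bilinear_op circ.

Lemma negLdualE x (a : dual A) y : negLdual circ x a y = a (circ x y).
Proof. by rewrite linfun_linearE // => k u v; rewrite circ_bil.2 linearP. Qed.

Lemma commutator_pairing_compat x y (c : dual A) :
  c (commutator circ x y) = negLdual circ x c y - negLdual circ y c x.
Proof. by rewrite !negLdualE raddfB. Qed.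

End NegLdual.

Section RepresentationProduct.
Variables (F : fieldType) (A : vectType F) (rho : A -> dual A -> dual A).
Hypothesis rho_bil : bilinear_op rho.

Definition rep_product x y : A :=
  bidual_vec (linfun (fun a : dual A => rho x a y : F^o)).

Lemma rep_productE x y (a : dual A) : a (rep_product x y) = rho x a y.
Proof.
by rewrite bidual_vecE linfun_linearE // => k b c; rewrite rho_bil.2 add_lfunE scale_lfunE.
Qed.

Lemma rep_product_bilinear : bilinear_op rep_product.
Proof.
split=> k u v w; apply: dual_inj => a; rewrite linearP /= !rep_productE.
  by rewrite rho_bil.1 add_lfunE scale_lfunE.
by rewrite linearP.
Qed.

Lemma negLdual_rep_product x : negLdual rep_product x = rho x.
Proof.
apply: functional_extensionality => a; apply/lfunP => y.
by rewrite negLdualE ?rep_productE //; exact: rep_product_bilinear.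
Qed.

Lemma rep_product_left_identity (br : A -> A -> A) :
  representation br rho ->
  (forall x y, commutator rep_product x y = br x y) ->
  forall x y z, rep_product x (rep_product y z) - rep_product y (rep_product x z)
                = rep_product (commutator rep_product y x) z.
Proof.
move=> [_ rho_rep] comm_br x y z; apply: dual_inj => a.
by rewrite raddfB /= !rep_productE comm_br rho_rep add_lfunE opp_lfunE.
Qed.

End RepresentationProduct.

Theorem proposition2p26 (F : fieldType) (char0 : [pchar F] =i pred0)
    (A : vectType F) :
  (forall circ : A -> A -> A,
     anti_pre_Lie circ ->
     comm_2cocycle (semidirect (commutator circ) (negLdual circ))
                   (@pairing_form F A)
     /\ nondegenerate_form (@pairing_form F A)) /\
  (forall (br : A -> A -> A) (rho : A -> dual A -> dual A),
     lie_bracket br ->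
     representation br rho ->
     comm_2cocycle (semidirect br rho) (@pairing_form F A) ->
     exists circ : A -> A -> A,
       [/\ anti_pre_Lie circ,
           (forall x y, circ x y - circ y x = br x y) &
           (forall x, rho x = negLdual circ x)]).
Proof.
split=> [circ [circ_bil _ _] | br rho [_ _ jacobi] rho_rep cocycle].
  split; last exact: pairing_form_nondegenerate.
  by apply: comm_2cocycle_pairing => x y c; apply: commutator_pairing_compat.
have rho_bil : bilinear_op rho by case: rho_rep.
have circ_bil := rep_product_bilinear rho_bil.
have comm_br x y : commutator (rep_product rho) x y = br x y.
  apply: dual_inj => a.
  by rewrite commutator_pairing_compat // !negLdual_rep_product //
             (comm_2cocycle_pairing_compat rho_bil cocycle).
exists (rep_product rho); split=> // [|x]; last by rewrite negLdual_rep_product.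
have two_neq0 : 2%:R != 0 :> F by move/pcharf0P: char0 => ->.
apply: anti_pre_Lie_of_Jacobi two_neq0 circ_bil _ _.
- exact: rep_product_left_identity rho_rep comm_br.
- by move=> x y z; rewrite !comm_br.
Qed.
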